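(* Let $N_{\mathbb{R}}$ be a finite dimensional real vector space with dual $M_{\mathbb{R}}$, let $C\subset N_{\mathbb{R}}$ be a convex set with recession cone $\sigma=\mathrm{rec}(C)$, and let $g\colon C\to\mathbb{R}$ be a closed convex function which is bounded above, with recession function $\mathrm{rec}(g)$. Then: (1) for every $x\in C$, the function $y\mapsto g(x+y)-\mathrm{rec}(g)(y)$ on $\sigma$ is bounded above; (2) if $C$ is closed and $g$ is Lipschitz continuous, then for every $x\in C$ and every $m$ in the interior of $\sigma^\vee$, the function $y\mapsto g(x+y)-\mathrm{rec}(g)(y)+m(y)$ on $\sigma$ is bounded below; (3) if $\sigma$ is full dimensional, then for every $x\in C$ and every $0\neq m\in\sigma^\vee$, the function $y\mapsto g(x+y)-\mathrm{rec}(g)(y)+m(y)$ on $\sigma$ is not bounded above.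
   Context: A convex function $g\colon C\to\mathbb{R}$ is closed if its epigraph $\{(x,y)\in C\times\mathbb{R}:y\ge g(x)\}$ is closed in $N_{\mathbb{R}}\times\mathbb{R}$. The recession cone is $\mathrm{rec}(C)=\{y\in N_{\mathbb{R}}:C+y\subset C\}$. The recession function is $\mathrm{rec}(g)(y)=\lim_{\lambda\to+\infty}(g(x+\lambda y)-g(x))/\lambda$ for $y\in\sigma$, which exists, is independent of $x\in C$, and (for $g$ bounded above) takes finite non-positive values. $\sigma^\vee=\{m\in M_{\mathbb{R}}:m(y)\ge0\ \forall y\in\sigma\}$. *)

From HB Require Import structures.
From mathcomp Require Import all_boot all_order all_algebra.
From mathcomp Require Import all_classical all_reals all_analysis.
Set Implicit Arguments. Unset Strict Implicit. Unset Printing Implicit Defensive.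
Import Order.TTheory GRing.Theory Num.Theory.
Import numFieldNormedType.Exports.
Local Open Scope classical_set_scope.
Local Open Scope ring_scope.

(* N_R = 'rV[R]_n ; M_R identified with 'rV[R]_n via the standard pairing. *)
Definition pairing (R : realType) (n : nat) (m y : 'rV[R]_n) : R :=
  \sum_(i < n) m ord0 i * y ord0 i.

Definition convex_set_on (R : realType) (n : nat) (C : set 'rV[R]_n) : Prop :=
  forall x y (t : R), C x -> C y -> 0 <= t <= 1 ->
    C (t *: x + (1 - t) *: y).

Definition convex_fun_on (R : realType) (n : nat) (C : set 'rV[R]_n)
  (g : 'rV[R]_n -> R) : Prop :=
  forall x y (t : R), C x -> C y -> 0 <= t <= 1 ->
    g (t *: x + (1 - t) *: y) <= t * g x + (1 - t) * g y.

Definition epigraph (R : realType) (n : nat) (C : set 'rV[R]_n)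
  (g : 'rV[R]_n -> R) : set ('rV[R]_n * R) :=
  [set p | C p.1 /\ g p.1 <= p.2].

Definition closed_fun_on (R : realType) (n : nat) (C : set 'rV[R]_n)
  (g : 'rV[R]_n -> R) : Prop := closed (epigraph C g).

Definition bounded_above_on {T : Type} (R : realType) (A : set T) (f : T -> R) : Prop :=
  exists M : R, forall x, A x -> f x <= M.

Definition bounded_below_on {T : Type} (R : realType) (A : set T) (f : T -> R) : Prop :=
  exists M : R, forall x, A x -> M <= f x.

Definition lipschitz_fun_on (R : realType) (n : nat) (C : set 'rV[R]_n)
  (g : 'rV[R]_n -> R) : Prop :=
  exists L : R, forall x y, C x -> C y -> `|g x - g y| <= L * `|x - y|.

Definition rec_cone (R : realType) (n : nat) (C : set 'rV[R]_n) : set 'rV[R]_n :=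
  [set y | forall x, C x -> C (x + y)].

Definition dual_cone (R : realType) (n : nat) (s : set 'rV[R]_n) : set 'rV[R]_n :=
  [set m | forall y, s y -> 0 <= pairing m y].

(* recession function: limit of (g(x + l y) - g x)/l as l -> +oo, for a
   base point x of C (the limit is independent of x in C) *)
Definition rec_fun (R : realType) (n : nat) (C : set 'rV[R]_n)
  (g : 'rV[R]_n -> R) (y : 'rV[R]_n) : R :=
  let x := xget 0 C in
  lim (((g (x + l *: y) - g x) / l) @[l --> +oo]).

Definition full_dimensional (R : realType) (n : nat) (s : set 'rV[R]_n) : Prop :=
  (interior s) !=set0.

From HB Require Import structures.
From mathcomp Require Import all_boot all_order all_algebra.
From mathcomp Require Import all_classical all_reals all_analysis.
From mathcomp Require Import ring lra.
Import Order.TTheory GRing.Theory Num.Theory.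
Import numFieldNormedType.Exports.
Local Open Scope classical_set_scope.
Local Open Scope ring_scope.
Set Implicit Arguments. Unset Strict Implicit. Unset Printing Implicit Defensive.

(* For b in C and z in rec(C), convexity makes the difference quotient
   (g (b + l z) - g b) / l nondecreasing in l > 0 and the upper bound on g makes
   it bounded, so rec(g)(z) is its supremum; closedness of the epigraph makes
   this supremum independent of b.  Then (1) is the case l = 1.  For (3), take
   y in rec(C) with m(y) > 0: along the ray l y the deficit
   l (rec(g)(y) - quotient) is o(l), while m(l y) grows linearly.  For (2),
   m(y) >= eps |y| on rec(C), and by Dini's theorem the quotients converge
   uniformly on the compact set of unit vectors of the closed cone rec(C) (they
   are L-Lipschitz in the direction), so the deficit is at most eps |y| / 2 for
   large |y|. *)

Lemma ray_convex_comb (R : fieldType) (V : lmodType R) (b z : V) (l1 l2 : R) :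
  l2 != 0 -> (l1 / l2) *: (b + l2 *: z) + (1 - l1 / l2) *: b = b + l1 *: z.
Proof.
move=> l20; rewrite scalerDr scalerA mulfVK // scalerBl scale1r.
by rewrite addrC addrA subrK.
Qed.

Definition diff_quot (R : realType) n (g : 'rV[R]_n -> R) (b z : 'rV[R]_n) (l : R) : R :=
  (g (b + l *: z) - g b) / l.

(* Clamping l at 1 makes the family nondecreasing on all of R, as
   nondecreasing_cvgr requires; by monotonicity its supremum is that of the
   quotients over l > 0. *)
Definition sup_diff_quot (R : realType) n (g : 'rV[R]_n -> R) (b z : 'rV[R]_n) : R :=
  sup (range (fun l => diff_quot g b z (Num.max l 1))).

Lemma diff_quot0 (R : realType) n (g : 'rV[R]_n -> R) b l : diff_quot g b 0 l = 0.
Proof. by rewrite /diff_quot scaler0 addr0 subrr mul0r. Qed.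

Lemma diff_quotZ (R : realType) n (g : 'rV[R]_n -> R) b z (l k : R) : l != 0 ->
  diff_quot g b (l *: z) k = l * diff_quot g b z (k * l).
Proof.
move=> l0; rewrite /diff_quot scalerA invfM [RHS]mulrC -!mulrA.
by rewrite mulVf // mulr1.
Qed.

Lemma sup_diff_quot_le (R : realType) n (g : 'rV[R]_n -> R) b z (r : R) :
  (forall l, 0 < l -> diff_quot g b z l <= r) -> sup_diff_quot g b z <= r.
Proof.
move=> H; apply: ge_sup; first by exists (diff_quot g b z (Num.max 0 1)), 0.
by move=> _ [l _ <-]; apply: H; rewrite lt_max ltr01 orbT.
Qed.

Section Pairing.
Variables (R : realType) (n : nat).

Lemma pairingC (a c : 'rV[R]_n) : pairing a c = pairing c a.
Proof. by apply: eq_bigr => i _; rewrite mulrC. Qed.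

Lemma pairingD (m a c : 'rV[R]_n) : pairing m (a + c) = pairing m a + pairing m c.
Proof. by rewrite /pairing -big_split; apply: eq_bigr => i _; rewrite mxE mulrDr. Qed.

Lemma pairingZ (m a : 'rV[R]_n) (c : R) : pairing m (c *: a) = c * pairing m a.
Proof. by rewrite /pairing mulr_sumr; apply: eq_bigr => i _; rewrite mxE mulrCA. Qed.

Lemma sqr_norm_le_pairing (y : 'rV[R]_n) : `|y| ^+ 2 <= pairing y y.
Proof.
have sqr_ge0 (x : R) : 0 <= x * x by rewrite -expr2 sqr_ge0.
have [->|/mx_norm_neq0 [[i0 j] /= yij]] := eqVneq `|y| 0.
  by rewrite expr0n /=; apply: sumr_ge0 => i _.
rewrite (_ : `|y| = `|y i0 j|) // real_normK ?num_real // expr2 /pairing (bigD1 j) //= (ord1 i0).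
by rewrite lerDl; apply: sumr_ge0 => i _.
Qed.

Lemma dual_cone_interior_coercive (s : set 'rV[R]_n) m :
  interior (dual_cone s) m ->
  exists2 eps : R, 0 < eps & forall y, s y -> eps * `|y| <= pairing m y.
Proof.
move=> /nbhs_ballP [e e0 sub_dual].
exists (e / 2) => [|y sy]; first by rewrite divr_gt0.
have [->|y0] := eqVneq `|y| 0; first by rewrite mulr0 (sub_dual _ (ballxx _ e0)).
have ny0 : 0 < `|y| by rewrite lt_def y0 normr_ge0.
set c := e / 2 / `|y|.
have c0 : 0 < c by rewrite !divr_gt0.
have : dual_cone s (m - c *: y).
  apply: sub_dual; rewrite -ball_normE /ball_ /= opprB addrC subrK normrZ.
  by rewrite gtr0_norm // divfK ?gt_eqF // ltr_pdivrMr // ltr_pMr // ltr1n.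
move=> /(_ y sy); rewrite -scaleNr pairingC pairingD pairingZ (pairingC y m) mulNr.
have : c * `|y| ^+ 2 <= c * pairing y y by rewrite ler_pM2l // sqr_norm_le_pairing.
have -> : e / 2 * `|y| = c * `|y| ^+ 2 by rewrite /c expr2; field; rewrite gt_eqF.
lra.
Qed.

Lemma full_dimensional_dual_cone_pos (s : set 'rV[R]_n) m :
  full_dimensional s -> dual_cone s m -> m != 0 ->
  exists2 y, s y & 0 < pairing m y.
Proof.
move=> [y0 /= /nbhs_ballP [e e0 sub_s]] dual_m m0.
have m_gt0 : 0 < `|m| by rewrite normr_gt0.
set c := e / (2 * `|m|).
have c0 : 0 < c by rewrite divr_gt0 // mulr_gt0.
have cm : c * `|m| = e / 2 by rewrite /c; field; rewrite gt_eqF.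
exists (y0 + c *: m).
  apply: sub_s; rewrite -ball_normE /ball_ /= opprD addrA subrr sub0r normrN.
  rewrite normrZ gtr0_norm // cm.
  by rewrite ltr_pdivrMr // ltr_pMr // ltr1n.
rewrite pairingD pairingZ ltr_wpDl ?(dual_m _ (sub_s _ (ballxx _ e0))) //.
apply: mulr_gt0 => //; apply: lt_le_trans (sqr_norm_le_pairing m).
by rewrite exprn_gt0.
Qed.

End Pairing.

Section Recession.
Variables (R : realType) (n : nat) (C : set 'rV[R]_n).

Lemma rec_cone0 : rec_cone C 0.
Proof. by move=> x Cx; rewrite addr0. Qed.

Lemma rec_cone_closed : closed C -> closed (rec_cone C).
Proof.
move=> closedC.
have -> : rec_cone C = \bigcap_(b in C) ((fun y => b + y) @^-1` C).
  by apply/seteqP; split => y /= H b Cb; exact: H.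
apply: closed_bigI => b Cb; apply: preimage_closed => // y _.
exact: (@cvgD _ _ _ (nbhs y) _ (fun=> b) id b y (cvg_cst b) cvg_id).
Qed.

Lemma rec_cone_ray_nat b z : C b -> rec_cone C z -> forall k : nat, C (b + k%:R *: z).
Proof.
move=> Cb zC; elim=> [|k IH]; first by rewrite scale0r addr0.
by rewrite -[k.+1]addn1 natrD scalerDl scale1r addrA; exact: zC.
Qed.

Hypothesis convexC : convex_set_on C.

Lemma rec_cone_ray b z l : C b -> rec_cone C z -> 0 <= l -> C (b + l *: z).
Proof.
move=> Cb zC l0.
set k := (Num.truncn l).+1.
have kl : l < k%:R by exact: truncnS_gt.
have k0 : 0 < k%:R :> R by rewrite ltr0n.
rewrite -(ray_convex_comb b z l (lt0r_neq0 k0)).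
apply: convexC (rec_cone_ray_nat Cb zC k) Cb _.
by rewrite divr_ge0 ?ler0n //= ler_pdivrMr // mul1r ltW.
Qed.

Lemma rec_coneZ z l : rec_cone C z -> 0 <= l -> rec_cone C (l *: z).
Proof. by move=> zC l0 x Cx; exact: rec_cone_ray. Qed.

Variable g : 'rV[R]_n -> R.
Hypothesis convexg : convex_fun_on C g.

Lemma le_diff_quot b z (l1 l2 : R) : C b -> rec_cone C z ->
  0 < l1 -> l1 <= l2 -> diff_quot g b z l1 <= diff_quot g b z l2.
Proof.
move=> Cb zC l10 l12.
have l20 : 0 < l2 by apply: lt_le_trans l12.
have t01 : 0 <= l1 / l2 <= 1.
  by rewrite divr_ge0 ?(ltW l10) ?(ltW l20) //= ler_pdivrMr // mul1r.
have := convexg (rec_cone_ray Cb zC (ltW l20)) Cb t01.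
rewrite ray_convex_comb ?gt_eqF // => convex_ineq.
rewrite /diff_quot ler_pdivrMr // lerBlDr.
have -> : (g (b + l2 *: z) - g b) / l2 * l1 + g b =
          l1 / l2 * g (b + l2 *: z) + (1 - l1 / l2) * g b.
  by field; rewrite gt_eqF.
exact: convex_ineq.
Qed.

Variable M : R.
Hypothesis g_le_M : forall x, C x -> g x <= M.

Lemma diff_quot_le_norm b z l : C b -> rec_cone C z -> 1 <= l ->
  diff_quot g b z l <= `|M - g b|.
Proof.
move=> Cb zC l1; have l0 : 0 < l by apply: lt_le_trans l1.
rewrite /diff_quot ler_pdivrMr //.
apply: le_trans (lerB (g_le_M (rec_cone_ray Cb zC (ltW l0))) (lexx _)) _.
by apply: le_trans (ler_norm _) _; rewrite ler_peMr.
Qed.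

Lemma has_ubound_diff_quot b z : C b -> rec_cone C z ->
  has_ubound (range (fun l => diff_quot g b z (Num.max l 1))).
Proof.
move=> Cb zC; exists `|M - g b| => _ [l _ <-].
by apply: diff_quot_le_norm; rewrite ?le_max ?lexx ?orbT.
Qed.

Lemma diff_quot_le_sup b z l : C b -> rec_cone C z -> 0 < l ->
  diff_quot g b z l <= sup_diff_quot g b z.
Proof.
move=> Cb zC l0; apply: (@le_trans _ _ (diff_quot g b z (Num.max l 1))).
  by apply: le_diff_quot; rewrite ?le_max ?lexx.
by apply: (ub_le_sup (has_ubound_diff_quot Cb zC)); exists l.
Qed.

Lemma sup_diff_quot_adherent b z e : C b -> rec_cone C z -> 0 < e ->
  exists2 l, 0 < l & sup_diff_quot g b z - e < diff_quot g b z l.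
Proof.
move=> Cb zC e0.
have has_sup_quot : has_sup (range (fun l => diff_quot g b z (Num.max l 1))).
  by split; [exists (diff_quot g b z (Num.max 0 1)), 0 | exact: has_ubound_diff_quot].
have [_ [l _ <-] near_sup] := sup_adherent e0 has_sup_quot.
by exists (Num.max l 1) => //; rewrite lt_max ltr01 orbT.
Qed.

Lemma diff_quot_cvg b z : C b -> rec_cone C z ->
  diff_quot g b z l @[l --> +oo] --> sup_diff_quot g b z.
Proof.
move=> Cb zC.
have mono : {homo (fun l => diff_quot g b z (Num.max l 1)) : l1 l2 / l1 <= l2}.
  move=> l1 l2 l12; apply: le_diff_quot => //; first by rewrite lt_max ltr01 orbT.
  by rewrite ge_max !le_max l12 lexx !orbT.
apply: cvg_trans (nondecreasing_cvgr mono (has_ubound_diff_quot Cb zC)).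
by apply: near_eq_cvg; near=> l; rewrite /= max_l.
Unshelve. all: end_near. Qed.

Lemma ray_le_sup_diff_quot b z l : C b -> rec_cone C z -> 0 < l ->
  g (b + l *: z) <= g b + l * sup_diff_quot g b z.
Proof.
move=> Cb zC l0; have := diff_quot_le_sup Cb zC l0.
by rewrite /diff_quot ler_pdivrMr // lerBlDl mulrC.
Qed.

Lemma sup_diff_quotZ b z l : C b -> rec_cone C z -> 0 < l ->
  sup_diff_quot g b (l *: z) = l * sup_diff_quot g b z.
Proof.
move=> Cb zC l0; apply/eqP; rewrite eq_le; apply/andP; split.
  apply: sup_diff_quot_le => k k0; rewrite diff_quotZ ?gt_eqF // ler_pM2l //.
  by apply: diff_quot_le_sup; rewrite ?mulr_gt0.
rewrite mulrC -ler_pdivlMr //; apply: sup_diff_quot_le => k k0.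
have := diff_quot_le_sup Cb (rec_coneZ zC (ltW l0)) (divr_gt0 k0 l0).
by rewrite diff_quotZ ?gt_eqF // divfK ?gt_eqF // ler_pdivlMr // mulrC.
Qed.

Lemma sub_sup_diff_quotZ b u l : C b -> rec_cone C u -> 0 < l ->
  g (b + l *: u) - sup_diff_quot g b (l *: u) =
  g b + l * (diff_quot g b u l - sup_diff_quot g b u).
Proof.
move=> Cb uC l0; rewrite sup_diff_quotZ // /diff_quot.
by field; rewrite gt_eqF.
Qed.

(* The point is the convex combination t (b' + (mu / t) z) + (1 - t) b. *)
Lemma epigraph_chord b b' z mu t : C b -> C b' -> rec_cone C z -> 0 < mu ->
  0 < t <= 1 ->
  epigraph C g (b + mu *: z + t *: (b' - b),
                g b + mu * sup_diff_quot g b' z + t * (g b' - g b)).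
Proof.
move=> Cb Cb' zC mu0 /andP[t0 t1].
have mut0 : 0 < mu / t by rewrite divr_gt0.
have C_ray := rec_cone_ray Cb' zC (ltW mut0).
have t01 : 0 <= t <= 1 by rewrite (ltW t0) t1.
have -> : b + mu *: z + t *: (b' - b) = t *: (b' + (mu / t) *: z) + (1 - t) *: b.
  by apply/rowP => j; rewrite !mxE; field; rewrite gt_eqF.
split; first exact: convexC.
apply: le_trans (convexg C_ray Cb t01) _.
have -> : g b + mu * sup_diff_quot g b' z + t * (g b' - g b) =
          t * (g b' + mu / t * sup_diff_quot g b' z) + (1 - t) * g b.
  by field; rewrite gt_eqF.
by rewrite lerD2r ler_pM2l // ray_le_sup_diff_quot.
Qed.

Hypothesis closedg : closed_fun_on C g.

(* Closedness of the epigraph lets t -> 0+ in epigraph_chord. *)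
Lemma sup_diff_quot_le_base b b' z : C b -> C b' -> rec_cone C z ->
  sup_diff_quot g b z <= sup_diff_quot g b' z.
Proof.
move=> Cb Cb' zC; apply: sup_diff_quot_le => mu mu0.
rewrite /diff_quot ler_pdivrMr // lerBlDl mulrC.
pose u t := (b + mu *: z + t *: (b' - b),
             g b + mu * sup_diff_quot g b' z + t * (g b' - g b)).
suff : epigraph C g (u 0) by rewrite /u /= scale0r addr0 mul0r addr0 => -[].
apply: (@closed_cvg _ _ _ (at_right_proper_filter 0) u _ closedg).
  near=> t; apply: (epigraph_chord Cb Cb' zC mu0); apply/andP; split.
    by near: t; exact: nbhs_right_gt.
  by near: t; apply: nbhs_right_le; exact: ltr01.
apply: (@cvg_at_right_filter R _ u 0 (u 0)).
have cvg1 : b + mu *: z + t *: (b' - b) @[t --> 0] --> b + mu *: z + 0 *: (b' - b).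
  apply: cvgD; first exact: cvg_cst.
  by apply: cvgZ; [exact: cvg_id | exact: cvg_cst].
have cvg2 : g b + mu * sup_diff_quot g b' z + t * (g b' - g b) @[t --> 0] -->
            g b + mu * sup_diff_quot g b' z + 0 * (g b' - g b).
  apply: cvgD; first exact: cvg_cst.
  by apply: cvgM; [exact: cvg_id | exact: cvg_cst].
exact: cvg_pair cvg1 cvg2.
Unshelve. all: end_near. Qed.

Lemma rec_fun_sup b z : C b -> rec_cone C z -> rec_fun C g z = sup_diff_quot g b z.
Proof.
move=> Cb zC; have C0 := xgetI 0 Cb.
have -> : sup_diff_quot g b z = sup_diff_quot g (xget 0 C) z.
  by apply/eqP; rewrite eq_le !sup_diff_quot_le_base.
rewrite /rec_fun /=; exact: (cvg_lim (@Rhausdorff R) (diff_quot_cvg C0 zC)).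
Qed.

Lemma rec_fun_sub_bounded_above x : C x ->
  bounded_above_on (rec_cone C) (fun y => g (x + y) - rec_fun C g y).
Proof.
move=> Cx; exists (g x) => y yC; rewrite (rec_fun_sup Cx yC) lerBlDr.
by have := ray_le_sup_diff_quot Cx yC ltr01; rewrite scale1r mul1r.
Qed.

Lemma rec_fun_sub_pairing_unbounded x m : full_dimensional (rec_cone C) -> C x ->
  dual_cone (rec_cone C) m -> m != 0 ->
  ~ bounded_above_on (rec_cone C) (fun y => g (x + y) - rec_fun C g y + pairing m y).
Proof.
move=> fullC Cx dual_m m0 [B le_B].
have [y yC d0] := full_dimensional_dual_cone_pos fullC dual_m m0.
set d := pairing m y in d0.
have d20 : 0 < d / 2 by rewrite divr_gt0.
have [l0 l0_gt0 near_sup] := sup_diff_quot_adherent Cx yC d20.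
set lam := Num.max l0 (`|B - g x| / (d / 2) + 1).
have l0_lam : l0 <= lam by rewrite le_max lexx.
have lam_big : `|B - g x| / (d / 2) < lam by rewrite lt_max ltrDl ltr01 orbT.
have lam0 : 0 < lam by apply: le_lt_trans lam_big; rewrite divr_ge0 // ltW.
have lamyC := rec_coneZ yC (ltW lam0).
have := le_B _ lamyC; rewrite (rec_fun_sup Cx lamyC) sub_sup_diff_quotZ //.
rewrite pairingZ -/d.
have : 0 < lam * (diff_quot g x y lam - (sup_diff_quot g x y - d / 2)).
  by rewrite mulr_gt0 // subr_gt0 (lt_le_trans near_sup) // le_diff_quot.
move: lam_big; rewrite ltr_pdivrMr // => lam_big.
have := ler_norm (B - g x).
lra.
Qed.

Variable L : R.
Hypothesis g_lipschitz : forall a b, C a -> C b -> `|g a - g b| <= L * `|a - b|.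

Lemma diff_quot_lipschitz x u u' l : C x -> rec_cone C u -> rec_cone C u' -> 0 < l ->
  `|diff_quot g x u l - diff_quot g x u' l| <= L * `|u - u'|.
Proof.
move=> Cx uC u'C l0.
have -> : diff_quot g x u l - diff_quot g x u' l =
          (g (x + l *: u) - g (x + l *: u')) / l.
  by rewrite /diff_quot; field; rewrite gt_eqF.
rewrite normrM normfV (gtr0_norm l0) ler_pdivrMr //.
apply: le_trans (g_lipschitz (rec_cone_ray Cx uC (ltW l0)) (rec_cone_ray Cx u'C (ltW l0))) _.
by rewrite opprD addrACA subrr add0r -scalerBr normrZ gtr0_norm // mulrA mulrAC.
Qed.

Lemma norm_diff_quot_le x u l : C x -> rec_cone C u -> 0 < l ->
  `|diff_quot g x u l| <= L * `|u|.
Proof.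
move=> Cx uC l0; have := diff_quot_lipschitz Cx uC rec_cone0 l0.
by rewrite diff_quot0 !subr0.
Qed.

Lemma sup_diff_quot_lipschitz x u u' : C x -> rec_cone C u -> rec_cone C u' ->
  sup_diff_quot g x u' <= sup_diff_quot g x u + L * `|u - u'|.
Proof.
move=> Cx uC u'C; apply: sup_diff_quot_le => l l0.
have := diff_quot_lipschitz Cx uC u'C l0; rewrite ler_norml => /andP[lip _].
have := diff_quot_le_sup Cx uC l0; lra.
Qed.

(* Dini's theorem on the compact set of unit vectors of rec(C). *)
Lemma diff_quot_unif_cvg x eta : closed C -> C x -> 0 < eta ->
  exists l0 : R, forall u l, rec_cone C u -> `|u| = 1 -> l0 < l ->
    sup_diff_quot g x u - eta <= diff_quot g x u l.
Proof.
move=> closedC Cx eta0.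
set K := rec_cone C `&` [set u | `|u| = 1].
have compactK : compact K.
  have boundedK : [bounded u | u in K].
    rewrite /bounded_near; near=> B => u [_ /= ->].
    by near: B; apply: nbhs_pinfty_ge; exact: num_real.
  apply: (bounded_closed_compact boundedK).
  apply: closedI; first exact: rec_cone_closed.
  apply: (@preimage_closed _ _ (fun u : 'rV[R]_n => `|u|) [set x : R | x = 1]).
    by move=> u _; exact: norm_continuous.
  exact: closed_eq.
have e3 : 0 < eta / 3 by rewrite divr_gt0.
have L1 : 0 < `|L| + 1 by rewrite ltr_wpDl.
set r := eta / 3 / (`|L| + 1).
have r0 : 0 < r by rewrite divr_gt0.
have lip_small (v : 'rV[R]_n) : `|v| < r -> L * `|v| <= eta / 3.
  move=> vr; have Lr : (`|L| + 1) * r = eta / 3 by rewrite /r mulrC divfK ?gt_eqF.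
  have : 0 <= `|L| * (r - `|v|) by rewrite mulr_ge0 // subr_ge0 ltW.
  have := ler_wpM2r (normr_ge0 v) (ler_norm L).
  lra.
have /compact_near_coveringP cover := compactK.
have [|l0 [_ unif]] := cover R (nbhs +oo)
  (fun l u => K u -> sup_diff_quot g x u - eta <= diff_quot g x u l) _.
  move=> u [uC u1].
  have [l1 l10 near_sup] := sup_diff_quot_adherent Cx uC e3.
  exists (ball u r, [set l | l1 < l]) => /=.
    by split; [exact: nbhsx_ballx | apply: nbhs_pinfty_gt; exact: num_real].
  move=> [u' l] /= [uu' l1l] [u'C _].
  have l0 : 0 < l by apply: lt_trans l1l.
  move: uu'; rewrite -ball_normE /ball_ /= => /lip_small uu'.
  have := diff_quot_lipschitz Cx uC u'C l0; rewrite ler_norml => /andP[_ lip].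
  have := le_diff_quot Cx uC l10 (ltW l1l).
  have := sup_diff_quot_lipschitz Cx uC u'C.
  lra.
by exists l0 => u l uC u1 /unif; apply; split.
Unshelve. all: end_near. Qed.

Lemma rec_fun_sub_pairing_bounded_below x m : closed C -> C x ->
  interior (dual_cone (rec_cone C)) m ->
  bounded_below_on (rec_cone C) (fun y => g (x + y) - rec_fun C g y + pairing m y).
Proof.
move=> closedC Cx /dual_cone_interior_coercive [eps eps0 m_coercive].
have [l0 unif] := diff_quot_unif_cvg closedC Cx (divr_gt0 eps0 (@ltr0Sn _ 1)).
set r := Num.max l0 0.
have Lr0 : 0 <= `|L| * r by rewrite mulr_ge0 // le_max lexx orbT.
exists (g x - 2 * (`|L| * r)) => y yC; rewrite (rec_fun_sup Cx yC).
have my := m_coercive y yC.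
have [ry|yr] := ltP r `|y|.
  set lam := `|y| in my ry.
  have lam0 : 0 < lam by apply: le_lt_trans ry; rewrite le_max lexx orbT.
  set u := lam^-1 *: y.
  have uC : rec_cone C u by apply: rec_coneZ; rewrite ?invr_ge0 ?ltW.
  have u1 : `|u| = 1 by rewrite normrZ gtr0_norm ?invr_gt0 // mulVf ?gt_eqF.
  have yE : y = lam *: u by rewrite scalerA divff ?gt_eqF // scale1r.
  have -> : g (x + y) - sup_diff_quot g x y =
            g x + lam * (diff_quot g x u lam - sup_diff_quot g x u).
    by rewrite yE; exact: sub_sup_diff_quotZ.
  have l0_lam : l0 < lam by apply: le_lt_trans ry; rewrite le_max lexx.
  have : 0 <= lam * (diff_quot g x u lam - (sup_diff_quot g x u - eps / 2)).
    by apply: mulr_ge0; [exact: ltW | rewrite subr_ge0; exact: unif].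
  have : 0 <= eps * lam by apply: mulr_ge0; exact: ltW.
  lra.
have := norm_diff_quot_le Cx yC ltr01.
rewrite /diff_quot divr1 scale1r ler_norml => /andP[lip_lo _].
have sup_le : sup_diff_quot g x y <= L * `|y|.
  apply: sup_diff_quot_le => l l_gt0.
  by have := norm_diff_quot_le Cx yC l_gt0; rewrite ler_norml => /andP[_].
have : L * `|y| <= `|L| * r.
  by apply: le_trans (ler_wpM2r (normr_ge0 y) (ler_norm L)) _; rewrite ler_wpM2l.
have : 0 <= eps * `|y| by apply: mulr_ge0; [exact: ltW | exact: normr_ge0].
lra.
Qed.

End Recession.

Theorem lemma2p27 (R : realType) (n : nat) (C : set 'rV[R]_n)
  (g : 'rV[R]_n -> R) :
  convex_set_on C -> convex_fun_on C g -> closed_fun_on C g ->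
  bounded_above_on C g ->
  [/\ (forall x, C x ->
         bounded_above_on (rec_cone C)
           (fun y => g (x + y) - rec_fun C g y)),
      (closed C -> lipschitz_fun_on C g ->
       forall x m, C x -> interior (dual_cone (rec_cone C)) m ->
         bounded_below_on (rec_cone C)
           (fun y => g (x + y) - rec_fun C g y + pairing m y))
    & (full_dimensional (rec_cone C) ->
       forall x m, C x -> dual_cone (rec_cone C) m -> m != 0 ->
         ~ bounded_above_on (rec_cone C)
           (fun y => g (x + y) - rec_fun C g y + pairing m y))].
Proof.
move=> convexC convexg closedg [M g_le_M]; split.
- by move=> x; exact: (rec_fun_sub_bounded_above convexC convexg g_le_M closedg).
- move=> closedC [L g_lipschitz] x m.
  exact: (rec_fun_sub_pairing_bounded_below convexC convexg g_le_M closedg g_lipschitz).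
- move=> fullC x m.
  exact: (rec_fun_sub_pairing_unbounded convexC convexg g_le_M closedg fullC).
Qed.
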